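(* Let $n_1,n_2,m_1,m_2$ be integers with $n_i\ge2$ and $0\le m_i\le n_i(n_i-1)$ for $i\in\{1,2\}$, and let $q_i$ and $r_i$ be the quotient and remainder of $m_i$ divided by $n_i$. If $n_1\le n_2$, $q_1\le q_2$ and $n_1-r_1\ge n_2-r_2$, then $\mathbb G(n_1,m_1)$ is a subgraph of $\mathbb G(n_2,m_2)$ (with vertex set $\{1,\dots,n_1\}\subseteq\{1,\dots,n_2\}$ and every arc of $\mathbb G(n_1,m_1)$ an arc of $\mathbb G(n_2,m_2)$).
   Context: For integers $n\ge2$ and $0\le m\le n(n-1)$, $\mathbb G(n,m)$ is the simple directed graph on vertex set $\{1,\dots,n\}$ whose arc set is $\{(\lceil \frac{i}{n-1}\rceil,\ n-((i-1)\bmod n)) : i=1,\dots,m\}$, where an arc $(j,k)$ goes from $j$ to $k$ and $a\bmod b\in\{0,\dots,b-1\}$; these $m$ pairs are pairwise distinct pairs of distinct vertices. *)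

From mathcomp Require Import all_boot.
Set Implicit Arguments. Unset Strict Implicit. Unset Printing Implicit Defensive.

Definition ceil_div (a b : nat) : nat := (a + b - 1) %/ b.

Definition Garc (n m j k : nat) : Prop :=
  exists i : nat, [/\ 1 <= i, i <= m,
                      j = ceil_div i (n - 1) & k = n - ((i - 1) %% n)].

Definition Gsubgraph (n1 m1 n2 m2 : nat) : Prop :=
  n1 <= n2 /\ (forall j k, Garc n1 m1 j k -> Garc n2 m2 j k).

(* Write an arc index of G(n, m) as i = q n + r + 1 with r < n: the arc then has
   head n - r and tail q + 1 + [n - 1 <= q + r], so it depends on (q, r) only
   through q and n - r.  Replacing (q, r) by (q, r + (n2 - n1)) therefore yields
   the same arc in G(n2, .), and the hypotheses on the quotients and remainders
   say precisely that this keeps the index below m2, comparing indices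
   lexicographically by (quotient, remainder). *)

From mathcomp Require Import all_boot zify.

Lemma divn_lt_double (a n : nat) : a < n.*2 -> a %/ n = (n <= a).
Proof.
case: (leqP n a) => [le_na | lt_an] lt_a2n; last exact: divn_small lt_an.
have -> : a = 1 * n + (a - n) by lia.
by rewrite divnMDl ?divn_small; lia.
Qed.

Lemma ceil_div_divmod (n q r : nat) : q + r < n.*2 ->
  ceil_div (q * n.+1 + r + 1) n = q.+1 + (n <= q + r).
Proof.
move=> lt_qr; have n_gt0 : 0 < n by lia.
rewrite /ceil_div.
have -> : q * n.+1 + r + 1 + n - 1 = q.+1 * n + (q + r) by rewrite mulnS mulSn; lia.
by rewrite divnMDl // divn_lt_double.
Qed.

Lemma ltn_divmod (n q r m : nat) : r < n ->
  (q * n + r < m) = (q < m %/ n) || (q == m %/ n) && (r < m %% n).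
Proof.
move=> lt_rn; rewrite {1}(divn_eq m n).
have lt_mod : m %% n < n by rewrite ltn_mod; lia.
case: (ltngtP q (m %/ n)) => [lt_q | gt_q | ->] /=.
- have : q.+1 * n <= m %/ n * n by rewrite leq_mul2r lt_q orbT.
  rewrite mulSn; lia.
- have : (m %/ n).+1 * n <= q * n by rewrite leq_mul2r gt_q orbT.
  rewrite mulSn; lia.
- by rewrite ltn_add2l.
Qed.

Lemma GarcP (n m : nat) : 2 <= n -> m <= n * (n - 1) -> forall j k,
  Garc n m j k <->
  exists q r, [/\ r < n, q * n + r < m, j = q.+1 + (n - 1 <= q + r) & k = n - r].
Proof.
case: n => [|n] // n_gt1 m_le j k; rewrite subn1.
have lt_mn : forall q r, q * n.+1 + r < m -> q < n.
  by move=> q r lt_qm; rewrite -(ltn_pmul2r (ltn0Sn n)); lia.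
split.
- move=> [i [i_gt0 le_im -> ->]].
  set q := (i - 1) %/ n.+1; set r := (i - 1) %% n.+1.
  have def_i : i = q * n.+1 + r + 1 by rewrite /q /r -divn_eq; lia.
  have lt_r : r < n.+1 by rewrite ltn_mod.
  have lt_q : q < n by apply: (lt_mn _ r); lia.
  exists q, r; split => //; first lia.
  by rewrite def_i subn1 ceil_div_divmod //; lia.
- move=> [q [r [lt_rn lt_qm -> ->]]].
  have lt_q := lt_mn _ _ lt_qm.
  exists (q * n.+1 + r + 1); split; [lia | lia | | ].
  + by rewrite subn1 ceil_div_divmod //; lia.
  + by rewrite addnK modnMDl modn_small.
Qed.

Theorem corollary2 (n1 n2 m1 m2 : nat) :
  2 <= n1 -> 2 <= n2 ->
  m1 <= n1 * (n1 - 1) -> m2 <= n2 * (n2 - 1) ->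
  n1 <= n2 -> m1 %/ n1 <= m2 %/ n2 ->
  n2 - m2 %% n2 <= n1 - m1 %% n1 ->
  Gsubgraph n1 m1 n2 m2.
Proof.
move=> n1_gt1 n2_gt1 m1_le m2_le le_n le_q le_r.
split=> // j k /(GarcP _ _ n1_gt1 m1_le) [q [r [lt_rn lt_qm -> ->]]].
apply/(GarcP _ _ n2_gt1 m2_le); exists q, (r + (n2 - n1)); split; [lia | | | lia].
- have lt_R1 : m1 %% n1 < n1 by rewrite ltn_mod; lia.
  have lt_R2 : m2 %% n2 < n2 by rewrite ltn_mod; lia.
  move: lt_qm; rewrite !ltn_divmod; lia.
- by congr (_ + nat_of_bool _); apply/idP/idP; lia.
Qed.
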